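(* Let $A\subset(0,1)^n$ be an open subanalytic cell which is prepared with center $0$, and let $J=\{i\in\{1,\dots,n\}: x_i \text{ is asymptotically undetermined on } A\}$. Then for any nonzero $\gamma\in\mathbb{Q}^n$ with support in $J$, the image of the function $A\to\mathbb{R}$, $x\mapsto x^\gamma=\prod_i x_i^{\gamma_i}$, is not contained in any compact subset of $(0,+\infty)$.
   Context: ''Subanalytic'' means globally subanalytic (definable in the real field expanded by all restricted analytic functions). A function on a set is analytic if it extends analytically to an open neighbourhood; an analytic unit is an analytic function of constant nonzero sign. Subanalytic terms: finite compositions of restricted analytic functions, $+$, $\times$ and the functions $t\mapsto t^r$ ($t\ge0$), $0$ ($t<0$), $r\in\mathbb{Q}$. A subanalytic cell $A\subset\mathbb{R}^n$ is a set such that for every $i$, $\Pi_i(A)$ is a subanalytic cylinder over $\Pi_{i-1}(A)$ in the variable $x_i$, i.e. $\Pi_{i-1}(A)$ is defined quantifier-freely by subanalytic terms, $=,<$, and $\Pi_i(A)$ is the graph $x_i=a(x_{<i})$, or $x_i>a$, or $x_i<a$, or $a<x_i<b$ over $\Pi_{i-1}(A)$ with $a<b$ analytic subanalytic terms (for $i=1$: a point or an open interval). The cell is open if no $\Pi_i(A)$ is a graph. For an open cell $A\subset(0,1)^n$ the zero tuple is a center, with coordinates $x$ themselves. Write, for $i=1,\dots,n$, $\Pi_i(A)=\{x_{\le i}: x_{<i}\in\Pi_{i-1}(A),\ a_i(x_{<i})<x_i<b_i(x_{<i})\}$. A strong subanalytic unit on such an open cell $A'\subset(0,1)^k$ with center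 $0$ is $U\circ\varphi$ with $\varphi(x)=(x^{\beta_1},\dots,x^{\beta_N})$ bounded on $A'$, $\beta_j\in\mathbb{Q}^k$, and $U$ an analytic unit on the closure of the image of $\varphi$. $x_i$ is asymptotically determined on $A$ if there is $C>0$ with $b_i<Ca_i$ on $\Pi_{i-1}(A)$, asymptotically undetermined otherwise. $\gamma\in\mathbb{Q}^n$ has support in $J$ if $\gamma_i=0$ for $i\notin J$. Preparedness (for open cells $A'\subset(0,1)^k$ with center $0$), defined by induction on $k$ for $J'$ a subset of the asymptotically undetermined indices: for $k=0$ everything is $\emptyset$-prepared; for $k\ge1$, $A'$ is $J'$-prepared if the family $\{a_k,b_k,b_k-a_k\}$ is $(J'\cap\{1,\dots,k-1\})$-prepared on $\Pi_{k-1}(A')$ with center $0$ and $0$ lies in the closure of the image of $a_k$; a finite family $\mathcal{F}$ of subanalytic functions on $A'$ is $J'$-prepared on $A'$ if $A'$ is $J'$-prepared and each $g\in\mathcal{F}$ is either $0$ on $A'$ or equals $x^\alpha u(x)$ with $u$ a strong subanalytic unit with center $0$ and $\alpha$ with support in $J'$. ''Prepared'' means $J'$-prepared with $J'$ the set of all asymptotically undetermined indices. *)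

From HB Require Import structures.
From mathcomp Require Import all_boot all_order all_algebra.
From mathcomp Require Import all_classical all_reals all_analysis.
Set Implicit Arguments. Unset Strict Implicit. Unset Printing Implicit Defensive.
Import Order.TTheory GRing.Theory Num.Theory.
Import numFieldNormedType.Exports.
Local Open Scope classical_set_scope.
Local Open Scope ring_scope.

(* Points of R^k are represented as sequences x : seq R with size x = k;
   coordinates are 0-based: x_i is [nth 0 x i], and x_{<i} is [take i x]. *)

Section Subanalytic.
Variable R : realType.

(* t |-> t^r for t >= 0 and 0 for t < 0 (r rational); 0^r = 0 for r <> 0,
   0^0 = 1 (MathComp's powR convention). *)
Definition powq (r : rat) (t : R) : R := if t < 0 then 0 else powR t (ratr r).

Definition sball (a : seq R) (e : R) : set (seq R) :=
  [set y | size y = size a /\ forall j, (j < size a)%N -> `|nth 0 y j - nth 0 a j| < e].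

Definition sopen (m : nat) (U : set (seq R)) : Prop :=
  (forall x, U x -> size x = m) /\
  (forall x, U x -> exists2 e : R, 0 < e & sball x e `<=` U).

Definition sclosure (m : nat) (S : set (seq R)) : set (seq R) :=
  [set y | size y = m /\ forall e : R, 0 < e -> exists z, S z /\ sball y e z].

Definition psum (m N : nat) (c : seq nat -> R) (a y : seq R) : R :=
  \sum_(al : m.-tuple 'I_N.+1)
     c [seq val i | i <- al] *
     \prod_(j < m) (nth 0 y j - nth 0 a j) ^+ (nth 0%N [seq val i | i <- al] j).

Definition pabs (m N : nat) (c : seq nat -> R) (a y : seq R) : R :=
  \sum_(al : m.-tuple 'I_N.+1)
     `|c [seq val i | i <- al]| *
     \prod_(j < m) `|nth 0 y j - nth 0 a j| ^+ (nth 0%N [seq val i | i <- al] j).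

Definition analytic_at (m : nat) (g : seq R -> R) (a : seq R) : Prop :=
  exists c : seq nat -> R, exists2 e : R, 0 < e & forall y, sball a e y ->
    (exists M : R, forall N, pabs m N c a y <= M) /\
    (psum m N c a y @[N --> \oo] --> g y).

Definition analytic_on (m : nat) (g : seq R -> R) (U : set (seq R)) : Prop :=
  forall a, U a -> analytic_at m g a.

Definition analytic_set (m : nat) (f : seq R -> R) (S : set (seq R)) : Prop :=
  exists U : set (seq R), exists g : seq R -> R,
    [/\ sopen m U, S `<=` U, analytic_on m g U & forall x, S x -> f x = g x].

Definition in_cube (x : seq R) : bool := all (fun t => (-1 <= t <= 1)) x.

Definition cube (m : nat) : set (seq R) := [set x | size x = m /\ in_cube x].

Definition restricted_analytic (m : nat) (f : seq R -> R) : Prop :=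
  exists g : seq R -> R, analytic_set m g (cube m) /\
    forall x, size x = m -> f x = if in_cube x then g x else 0.

Inductive saterm : (seq R -> R) -> Prop :=
| sa_var (j : nat) : saterm (fun x => nth 0 x j)
| sa_ran (m : nat) (f : seq R -> R) (g : 'I_m -> seq R -> R) :
    restricted_analytic m f -> (forall i, saterm (g i)) ->
    saterm (fun x => f (map (fun i => g i x) (enum 'I_m)))
| sa_add (g h : seq R -> R) : saterm g -> saterm h -> saterm (fun x => g x + h x)
| sa_mul (g h : seq R -> R) : saterm g -> saterm h -> saterm (fun x => g x * h x)
| sa_pow (r : rat) (g : seq R -> R) : saterm g -> saterm (fun x => powq r (g x)).

Definition monom (k : nat) (be : 'I_k -> rat) (x : seq R) : R :=
  \prod_(i < k) powq (be i) (nth 0 x i).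

(* Open cell given by the data a_i < x_i < b_i (a_i, b_i functions of x_{<i}).
   [cellset a b k] is Pi_k of the cell. *)
Definition cellset (a b : nat -> seq R -> R) (k : nat) : set (seq R) :=
  [set x | size x = k /\
     forall i, (i < k)%N -> a i (take i x) < nth 0 x i < b i (take i x)].

Definition open_cell_data (n : nat) (a b : nat -> seq R -> R) : Prop :=
  forall i, (i < n)%N ->
    [/\ saterm (a i), saterm (b i),
        analytic_set i (a i) (cellset a b i),
        analytic_set i (b i) (cellset a b i)
      & forall x, cellset a b i x -> a i x < b i x].

Definition subset_unit_cube (n : nat) (A : set (seq R)) : Prop :=
  forall x, A x -> forall j, (j < n)%N -> 0 < nth 0 x j < 1.

Definition asym_det (a b : nat -> seq R -> R) (i : nat) : Prop :=
  exists2 C : R, 0 < C & forall x, cellset a b i x -> b i x < C * a i x.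

Definition undetJ (n : nat) (a b : nat -> seq R -> R) : set nat :=
  [set i | (i < n)%N /\ ~ asym_det a b i].

Definition monomap (k N : nat) (be : 'I_N -> 'I_k -> rat) (x : seq R) : seq R :=
  map (fun j => monom (be j) x) (enum 'I_N).

Definition strong_unit (k : nat) (A : set (seq R)) (u : seq R -> R) : Prop :=
  exists N : nat, exists be : 'I_N -> 'I_k -> rat, exists U : seq R -> R,
    [/\ exists M : R, forall x, A x -> forall j, `|monom (be j) x| <= M,
        analytic_set N U (sclosure N (monomap be @` A)),
        (forall y, sclosure N (monomap be @` A) y -> 0 < U y) \/
        (forall y, sclosure N (monomap be @` A) y -> U y < 0)
      & forall x, A x -> u x = U (monomap be x)].

Definition prepared_fn (k : nat) (J : set nat) (a b : nat -> seq R -> R)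
    (g : seq R -> R) : Prop :=
  (forall x, cellset a b k x -> g x = 0) \/
  exists al : 'I_k -> rat, (forall i : 'I_k, ~ J (val i) -> al i = 0) /\
    exists u, strong_unit k (cellset a b k) u /\
      forall x, cellset a b k x -> g x = monom al x * u x.

Fixpoint prepared_cell (k : nat) (J : set nat) (a b : nat -> seq R -> R) : Prop :=
  match k with
  | 0 => True
  | k'.+1 =>
    let J' := J `&` [set i | (i < k')%N] in
    [/\ prepared_cell k' J' a b,
        prepared_fn k' J' a b (a k'),
        prepared_fn k' J' a b (b k'),
        prepared_fn k' J' a b (fun x => b k' x - a k' x)
      & forall e : R, 0 < e -> exists x, cellset a b k' x /\ `|a k' x| < e]
  end.

End Subanalytic.

From HB Require Import structures.
From mathcomp Require Import all_boot all_order all_algebra.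
From mathcomp Require Import all_classical all_reals all_analysis.
From mathcomp Require Import ring lra.
Set Implicit Arguments. Unset Strict Implicit. Unset Printing Implicit Defensive.
Import Order.TTheory GRing.Theory Num.Theory.
Import numFieldNormedType.Exports.
Local Open Scope classical_set_scope.
Local Open Scope ring_scope.

(* Let x_k be the last variable with gam_k <> 0; it is asymptotically
   undetermined.  Fixing the first k coordinates, x^gam = x_k^(gam_k) * P on
   the fibre a_k < x_k < b_k, with P independent of x_k.  Since b_k/a_k is
   unbounded, for every D >= 1 some fibre contains both t and D t, and the
   two values of x^gam differ by the factor D^(gam_k), which is unbounded in
   D.  But on a compact subset of (0, +oo) the ratio of two values is bounded. *)

Lemma compact_pos_bounds (R : realType) (K : set R) :
  compact K -> K `<=` [set t : R | 0 < t] ->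
  exists m M : R, [/\ 0 < m, m <= M & forall t, K t -> m <= t <= M].
Proof.
move=> cK Kpos; have [M [_ KM]] := compact_bounded cK.
have : nbhs (0 : R) (~` K).
  apply: (closed_openC (compact_closed (@Rhausdorff R) cK)) => /Kpos /=.
  by rewrite ltxx.
move/nbhs_ballP => [e /= e0 eK].
exists (e / 2), (Num.max (M + 1) (e / 2)).
split; rewrite ?divr_gt0 ?le_max ?lexx ?orbT //.
move=> t Kt; apply/andP; split.
  rewrite leNgt; apply/negP => te; apply: (eK t) => //.
  rewrite /ball /= sub0r normrN ger0_norm; last exact/ltW/Kpos.
  by apply: lt_trans te _; rewrite ltr_pdivrMr // ltr_pMr // ltr1n.
rewrite le_max; apply/orP; left; apply: le_trans (ler_norm t) _.
by apply: (KM (M + 1)); rewrite ?ltrDl ?ltr01.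
Qed.

Lemma scaled_pair_bounds (R : realFieldType) (m M c v : R) :
  0 < m -> m <= v <= M -> m <= c * v <= M -> m / M <= c <= M / m.
Proof.
move=> m0 /andP[mv vM] /andP[mcv cvM].
have v0 : 0 < v by lra.
have M0 : 0 < M by lra.
have c0 : 0 < c by nra.
apply/andP; split.
  by rewrite ler_pdivrMr //; nra.
by rewrite ler_pdivlMr //; nra.
Qed.

Lemma powR_escape (R : realType) (rho r : R) : 0 < rho -> r != 0 ->
  exists2 D : R, 1 <= D & ~ (rho^-1 <= D `^ r <= rho).
Proof.
move=> rho0 r0; exists ((rho + 1) `^ `|r|^-1).
  rewrite [X in X <= _](_ : 1 = 1 `^ `|r|^-1); last by rewrite powR1.
  by apply: ge0_ler_powR; rewrite ?nnegrE ?invr_ge0 //; lra.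
rewrite -powRrM; case: (ltrP 0 r) => [rpos|rneg].
  rewrite gtr0_norm // mulVf // powRr1; lra.
rewrite ler0_norm // invrN mulNr mulVf // powRN powRr1; last lra.
by rewrite lef_pV2 ?posrE; lra.
Qed.

Lemma powq0 (R : realType) (t : R) : 0 <= t -> powq 0 t = 1.
Proof. by move=> t0; rewrite /powq ltNge t0 rmorph0 powRr0. Qed.

Lemma powq_gt0 (R : realType) (r : rat) (t : R) : 0 < t -> powq r t = t `^ ratr r.
Proof. by move=> t0; rewrite /powq ltNge (ltW t0). Qed.

Lemma monom_last (R : realType) (n : nat) (gam : 'I_n -> rat) (k : 'I_n)
    (y : seq R) :
  (forall j : 'I_n, (k < j)%N -> gam j = 0) ->
  (forall j, (j < n)%N -> 0 <= nth 0 y j) ->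
  monom gam y =
    powq (gam k) (nth 0 y k) * \prod_(i < n | (i < k)%N) powq (gam i) (nth 0 y i).
Proof.
move=> gam_top y0; rewrite /monom (bigD1 k) //=; congr (_ * _).
rewrite big_mkcond [RHS]big_mkcond; apply: eq_bigr => i _ /=.
case: (ltngtP i k) => [ik|ki|/val_inj->]; last by rewrite eqxx.
  by rewrite neq_ltn ik.
by rewrite neq_ltn ki orbT gam_top // powq0 ?y0.
Qed.

Lemma cellset_rcons (R : realType) (a b : nat -> seq R -> R) k x t :
  cellset a b k x -> a k x < t < b k x -> cellset a b k.+1 (rcons x t).
Proof.
move=> [sx cx] ht; split; first by rewrite size_rcons sx.
move=> i; rewrite ltnS leq_eqVlt => /orP[/eqP->|ik].
  by rewrite nth_rcons sx ltnn eqxx -cats1 take_size_cat.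
by rewrite nth_rcons sx ik -cats1 takel_cat ?sx ?(ltnW ik) //; apply: cx.
Qed.

Section OpenCell.
Variables (R : realType) (n : nat) (a b : nat -> seq R -> R).
Hypothesis fibre_nonempty :
  forall i x, (i < n)%N -> cellset a b i x -> a i x < b i x.
Hypothesis cell_in_cube : subset_unit_cube n (cellset a b n).

Lemma cellset_extend k x : (k <= n)%N -> cellset a b k x ->
  exists y, cellset a b n y /\ take k y = x.
Proof.
move=> kn cx.
suff /(_ (n - k)%N) : forall d, (k + d <= n)%N ->
    exists y, cellset a b (k + d) y /\ take k y = x.
  by rewrite subnKC //; apply.
elim=> [|d IH] kdn.
  by exists x; rewrite addn0; split => //; case: cx => sx _; rewrite take_oversize ?sx.
rewrite addnS in kdn *; have [y [cy yx]] := IH (ltnW kdn).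
have ab := fibre_nonempty kdn cy.
exists (rcons y ((a (k + d) y + b (k + d) y) / 2)); split.
  by apply: cellset_rcons => //; apply/andP; split; lra.
by rewrite -cats1 takel_cat //; case: cy => -> _; apply: leq_addr.
Qed.

Lemma fibre_point k x t : (k < n)%N -> cellset a b k x -> a k x < t < b k x ->
  exists y, cellset a b n y /\ take k.+1 y = rcons x t.
Proof. by move=> kn cx /(cellset_rcons cx); apply: cellset_extend. Qed.

Lemma fibre_gt0 k x t : (k < n)%N -> cellset a b k x -> a k x < t < b k x ->
  0 < t.
Proof.
move=> kn cx ht; have [y [cy yxt]] := fibre_point kn cx ht.
have [sx _] := cx.
have <- : nth 0 y k = t by rewrite -(nth_take 0 (ltnSn k)) yxt nth_rcons sx ltnn eqxx.
by have /andP[] := cell_in_cube cy kn.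
Qed.

(* Taking C = 4 D in the failure of b_k < C a_k gives a fibre containing
   t = b_k / (2 D) and D t. *)
Lemma undetermined_wide_fibre k (D : R) : (k < n)%N -> ~ asym_det a b k ->
  1 <= D -> exists x t, [/\ cellset a b k x, 0 < t, a k x < t & D * t < b k x].
Proof.
move=> kn undet D1.
have [x [cx bx]] : exists x, cellset a b k x /\ 4 * D * a k x <= b k x.
  apply: contrapT => nowide; apply: undet; exists (4 * D); first lra.
  move=> x cx; rewrite ltNge; apply/negP => bx; apply: nowide; exists x; split => //.
have ab := fibre_nonempty kn cx.
have b0 : 0 < b k x.
  suff : 0 < (a k x + b k x) / 2 by lra.
  by apply: (fibre_gt0 kn cx); apply/andP; split; lra.
exists x, (b k x / (2 * D)); split => //.
- by rewrite divr_gt0 //; lra.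
- rewrite ltr_pdivlMr; nra.
- have -> : D * (b k x / (2 * D)) = b k x / 2 by field; lra.
  lra.
Qed.

Lemma monom_on_fibre (gam : 'I_n -> rat) (k : 'I_n) x s :
  (forall j : 'I_n, (k < j)%N -> gam j = 0) ->
  cellset a b k x -> a k x < s < b k x ->
  exists2 y, cellset a b n y &
    monom gam y =
      s `^ ratr (gam k) * \prod_(i < n | (i < k)%N) powq (gam i) (nth 0 x i).
Proof.
move=> gam_top cx hs; have [y [cy yxs]] := fibre_point (ltn_ord k) cx hs.
have [sx _] := cx.
have y_prefix i : (i <= k)%N -> nth 0 y i = nth 0 (rcons x s) i.
  by move=> ik; rewrite -(nth_take 0 (ik : (i < k.+1)%N)) yxs.
have y_pos j : (j < n)%N -> 0 <= nth 0 y j.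
  by move=> /(cell_in_cube cy) /andP[/ltW].
exists y => //; rewrite (monom_last gam_top y_pos).
rewrite y_prefix // nth_rcons sx ltnn eqxx powq_gt0; last first.
  exact: fibre_gt0 (ltn_ord k) cx hs.
suff -> : \prod_(i < n | (i < k)%N) powq (gam i) (nth 0 y i) =
          \prod_(i < n | (i < k)%N) powq (gam i) (nth 0 x i) by [].
by apply: eq_bigr => i ik; rewrite y_prefix 1?ltnW // nth_rcons sx ik.
Qed.

End OpenCell.

Theorem lemma3p5 (R : realType) (n : nat) (a b : nat -> seq R -> R)
    (gam : 'I_n -> rat) :
  open_cell_data n a b ->
  subset_unit_cube n (cellset a b n) ->
  prepared_cell n (undetJ n a b) a b ->
  (exists i : 'I_n, gam i != 0) ->
  (forall i : 'I_n, ~ undetJ n a b (val i) -> gam i = 0) ->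
  ~ (exists K : set R,
       [/\ compact K, K `<=` [set t : R | 0 < t] &
           monom gam @` cellset a b n `<=` K]).
Proof.
move=> cell_data in_cube _ [i0 gam_i0] gam_supp [K [cK Kpos monK]].
have fibre_nonempty i x : (i < n)%N -> cellset a b i x -> a i x < b i x.
  by move=> /cell_data[_ _ _ _]; apply.
have [m [M [m0 mM Kbd]]] := compact_pos_bounds cK Kpos.
have monom_bd y : cellset a b n y -> m <= monom gam y <= M.
  by move=> cy; apply/Kbd/monK; exists y.
case: (@arg_maxnP _ i0 (fun i => gam i != 0) val gam_i0) => k gam_k k_max.
have gam_top (j : 'I_n) : (k < j)%N -> gam j = 0.
  by move=> kj; apply/eqP; apply: contraTT kj => /k_max; rewrite -leqNgt.
have [_ undet] : undetJ n a b k by apply: contrapT => /gam_supp; apply/eqP.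
have r0 : ratr (gam k) != 0 :> R by rewrite fmorph_eq0.
have [D D1 D_escapes] := powR_escape (divr_gt0 (lt_le_trans m0 mM) m0) r0.
have [x [t [cx t0 a_lt_t Dt_lt_b]]] :=
  undetermined_wide_fibre fibre_nonempty in_cube (ltn_ord k) undet D1.
have t_Dt : t <= D * t by rewrite ler_peMl // ltW.
have t_fibre : a k x < t < b k x by apply/andP; split; lra.
have Dt_fibre : a k x < D * t < b k x by apply/andP; split; lra.
have [y1 cy1 mon1] := monom_on_fibre fibre_nonempty in_cube gam_top cx t_fibre.
have [y2 cy2 mon2] := monom_on_fibre fibre_nonempty in_cube gam_top cx Dt_fibre.
apply: D_escapes; rewrite invf_div; apply: (scaled_pair_bounds m0 (monom_bd _ cy1)).
rewrite mon1 mulrA -powRM ?(ltW t0) ?(le_trans ler01 D1) // -mon2.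
exact: monom_bd.
Qed.
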